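(* Let $1 \le k \le 3$ and let $\sigma_k=[v_0,\dots,v_k]$ be a $k$-simplex in Euclidean 3-space whose vertices $v_0,\dots,v_k$ are represented as normalized PGA points in $\mathbb{R}_{3,0,1}$. Then \[ \frac{1}{k!}\,\lVert v_0\vee\cdots\vee v_k\rVert \;=\; \frac{1}{k!}\Big\lVert \sum_{\sigma_{k-1}\in\partial\sigma_k} S(\sigma_{k-1})\Big\rVert_\infty \;=\; \frac{1}{k!}\Big\lVert \sum_{i=0}^{k}(-1)^i\, v_0\vee\cdots\vee \widehat{v_i}\vee\cdots\vee v_k\Big\rVert_\infty , \] where $\widehat{v_i}$ means that $v_i$ is omitted from the join. That is, the $k$-magnitude of $\sigma_k$ (length, area, volume) can be computed from the carriers of the $(k-1)$-dimensional facets of its oriented boundary.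
   Context: $\mathbb{R}_{3,0,1}$ (3D plane-based geometric algebra, PGA) is the Clifford algebra generated by an orthogonal basis $\mathbf e_0,\mathbf e_1,\mathbf e_2,\mathbf e_3$ with $\mathbf e_1^2=\mathbf e_2^2=\mathbf e_3^2=1$ and $\mathbf e_0^2=0$; $\mathbf e_{ij\cdots}$ denotes the geometric product of distinct basis vectors, $\wedge$ is the outer (wedge) product, and $I_3=\mathbf e_{123}$. The Hodge dual $A\mapsto A^*$ is the linear map determined on basis blades $\mathbf e_J$ by $\mathbf e_J\,\mathbf e_J^*=\mathbf e_{0123}$ (with $\mathbf e_J^*$ a multiple of the complementary basis blade); the join is defined by $(A\vee B)^*=A^*\wedge B^*$. Every multivector splits uniquely as $A=A_E+\mathbf e_0A_I$ with $A_E,A_I$ in the subalgebra generated by $\mathbf e_1,\mathbf e_2,\mathbf e_3$. The (Euclidean) norm is $\lVert A\rVert=\lVert A_E\rVert$ and the ideal norm is $\lVert A\rVert_\infty=\lVert A_I\rVert$, where for an element $B$ of the Euclidean subalgebra $\lVert B\rVert$ is the square root of the sum of squares of its coefficients on the basis blades (equivalently $\sqrt{\tilde B B}$ for blades, $\tilde{\ }$ denoting reversion). A normalized point at position $\vec v=x\mathbf e_1+y\mathbf e_2+z\mathbf e_3$ is $v=(\mathbf e_0+\vec v)^*=\mathbf e_{123}-\mathbf e_0\vec v\,\mathbf e_{123}$. For a simplex $\sigma=[v_0,\dots,v_m]$ its carrier is $S(\sigma)=v_0\vee\cdots\vee v_m$. The oriented boundary is $\partial[v_0,\dots,v_k]=\sum_{i=0}^k(-1)^i[v_0,\dots,\widehat{v_i},\dots,v_k]$,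 and the sum over $\partial\sigma_k$ of $S$ is taken with these signs. *)

From HB Require Import structures.
From mathcomp Require Import all_boot all_order all_algebra.
Set Implicit Arguments. Unset Strict Implicit. Unset Printing Implicit Defensive.
Import Order.TTheory GRing.Theory Num.Theory.
Local Open Scope ring_scope.

(* Basis vectors e_0,e_1,e_2,e_3 are indexed by 'I_4 (e_0 is index 0, with
   e_0^2 = 0).  A basis blade e_J (J a subset of {0,1,2,3}) is the geometric
   product of the e_j, j in J, in increasing order. *)
Notation mv R := {ffun {set 'I_4} -> R}.

(* reordering sign: e_J e_K = sgnJK J K e_{J u K} when J, K disjoint *)
Definition sgnJK (R : rcfType) (J K : {set 'I_4}) : R :=
  (-1) ^+ #|[set x in setX J K | (x.2 < x.1)%N]|.

Definition mvscale (R : rcfType) (a : R) (A : mv R) : mv R := [ffun L => a * A L].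

Definition blade (R : rcfType) (J : {set 'I_4}) : mv R := [ffun L => (L == J)%:R].

Definition wedge (R : rcfType) (A B : mv R) : mv R :=
  [ffun L => \sum_(J : {set 'I_4}) \sum_(K : {set 'I_4} |
       [disjoint J & K] && (J :|: K == L)) sgnJK R J K * A J * B K].

(* Hodge dual: e_J^* = sgnJK J (~: J) e_{~: J}; this is the unique multiple c
   of the complementary blade with e_J (c e_{~:J}) = e_0123, since the
   geometric product of disjoint blades is their wedge and sgn^2 = 1. *)
Definition hodge (R : rcfType) (A : mv R) : mv R :=
  [ffun L => sgnJK R (~: L) L * A (~: L)].

Definition unhodge (R : rcfType) (A : mv R) : mv R :=
  [ffun L => sgnJK R L (~: L) * A (~: L)].

Definition join (R : rcfType) (A B : mv R) : mv R :=
  unhodge (wedge (hodge A) (hodge B)).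

Fixpoint joins (R : rcfType) (s : seq (mv R)) : mv R :=
  match s with
  | [::] => blade R setT
  | [:: a] => a
  | a :: s' => join a (joins s')
  end.

Definition e1 : 'I_4 := @inord 3 1.
Definition e2 : 'I_4 := @inord 3 2.
Definition e3 : 'I_4 := @inord 3 3.

(* normalized point at position p = x e1 + y e2 + z e3 : (e_0 + p)^* *)
Definition point (R : rcfType) (p : 'rV[R]_3) : mv R :=
  hodge (blade R [set ord0] + mvscale (p 0 0) (blade R [set e1])
         + mvscale (p 0 1) (blade R [set e2]) + mvscale (p 0 2) (blade R [set e3])).

(* A = A_E + e_0 A_I: coefficients of A_E are those on blades without e_0,
   coefficients of A_I are those on blades containing e_0 (e_J = e_0 e_{J\0}). *)
Definition enorm (R : rcfType) (A : mv R) : R :=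
  Num.sqrt (\sum_(J : {set 'I_4} | ord0 \notin J) A J ^+ 2).
Definition inorm (R : rcfType) (A : mv R) : R :=
  Num.sqrt (\sum_(J : {set 'I_4} | ord0 \in J) A J ^+ 2).

Definition carrier (R : rcfType) (s : seq 'rV[R]_3) : mv R := joins (map (@point R) s).

Definition face (R : rcfType) (k : nat) (v : 'I_k.+1 -> 'rV[R]_3) (i : 'I_k.+1)
  : seq 'rV[R]_3 := [seq v j | j <- enum 'I_k.+1 & j != i].

Definition boundary_carrier_sum (R : rcfType) (k : nat) (v : 'I_k.+1 -> 'rV[R]_3)
  : mv R := \sum_(i < k.+1) mvscale ((-1) ^+ i) (carrier (face v i)).

From HB Require Import structures.
From mathcomp Require Import all_boot all_order all_algebra.
Set Implicit Arguments. Unset Strict Implicit. Unset Printing Implicit Defensive.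
Import Order.TTheory GRing.Theory Num.Theory.
Local Open Scope ring_scope.

(* The Hodge dual turns joins into wedges: the dual of v_0 v ... v v_k is
   W = u_0 /\ ... /\ u_k, where u_i = v_i^* is a vector with e_0-coefficient -1,
   and the dual of the i-th facet carrier is the wedge W_i of the u_j, j <> i.
   The dual permutes coefficients up to sign, exchanging blades with and without
   e_0, so the left norm is that of the coefficients of W on the blades e_0 e_K,
   and the right one that of the coefficients of sum_i (-1)^i W_i on the e_K
   (e_0 not in K).  Wedging with a vector u of e_0-coefficient c obeys the
   Leibniz rule
     (u /\ X)_{e_0 K} = c X_K - sum_(j in K) sign(j, K\j) u_j X_{e_0 (K\j)},
   and induction on the number of factors gives W_{e_0 K} = c (sum_i (-1)^i W_i)_K.
   Nothing uses 1 <= k <= 3: the identity holds for every k. *)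

Lemma sum_card1 (T : finType) (V : nmodType) (F : {set T} -> V) :
  (forall A : {set T}, #|A| != 1%N -> F A = 0) -> \sum_A F A = \sum_x F [set x].
Proof.
move=> F0; rewrite (bigID (mem [set [set x] | x : T])) /= [X in _ + X]big1 ?addr0.
  by rewrite big_imset //; apply: in2W; exact: set1_inj.
by move=> A AT; apply: F0; apply: contra AT => /cards1P[x ->]; exact: imset_f.
Qed.

Section PGA.
Variable R : rcfType.
Implicit Types (A X u : mv R) (J K L M : {set 'I_4}).

Lemma sgnJK_sqr J K : sgnJK R J K ^+ 2 = 1.
Proof. exact: sqrr_sign. Qed.

Lemma sgnJK_set0r J : sgnJK R J set0 = 1.
Proof.
rewrite /sgnJK (_ : [set x in setX J set0 | _] = set0) ?cards0 //.
by apply/setP => -[a b]; rewrite !inE andbF.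
Qed.

Lemma sgnJK_set1l j M : sgnJK R [set j] M = (-1) ^+ #|[set y in M | (y < j)%N]|.
Proof.
rewrite /sgnJK -[in RHS](card_imset _ (@can_inj _ _ (pair j) snd (fun => erefl))).
congr (_ ^+ _); apply: eq_card => -[a b]; rewrite !inE /=.
apply/andP/imsetP => [[/andP[/eqP-> bM] ba]|[y + [-> ->]]].
  by exists b; rewrite // inE bM.
by rewrite inE eqxx => /andP.
Qed.

Lemma sgnJK_set1r j M : sgnJK R M [set j] = (-1) ^+ #|[set x in M | (j < x)%N]|.
Proof.
rewrite /sgnJK -[in RHS](card_imset _ (@can_inj _ _ (pair^~ j) fst (fun => erefl))).
congr (_ ^+ _); apply: eq_card => -[a b]; rewrite !inE /=.
apply/andP/imsetP => [[/andP[aM /eqP->] ba]|[y + [-> ->]]].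
  by exists a; rewrite // inE aM.
by rewrite inE eqxx andbT => /andP.
Qed.

Lemma hodgeK : cancel (@hodge R) (@unhodge R).
Proof.
by move=> A; apply/ffunP => L; rewrite !ffunE setCK mulrA -expr2 sgnJK_sqr mul1r.
Qed.

Lemma unhodgeK : cancel (@unhodge R) (@hodge R).
Proof.
by move=> A; apply/ffunP => L; rewrite !ffunE setCK mulrA -expr2 sgnJK_sqr mul1r.
Qed.

Lemma enorm_unhodge A : enorm (unhodge A) = inorm A.
Proof.
rewrite /enorm /inorm (reindex_inj (@setC_inj _)) /=; congr Num.sqrt.
by apply: eq_big => [L|L _]; rewrite ?inE ?negbK // ffunE setCK exprMn sgnJK_sqr mul1r.
Qed.

Lemma inorm_unhodge A : inorm (unhodge A) = enorm A.
Proof.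
rewrite /enorm /inorm (reindex_inj (@setC_inj _)) /=; congr Num.sqrt.
by apply: eq_big => [L|L _]; rewrite ?inE // ffunE setCK exprMn sgnJK_sqr mul1r.
Qed.

Lemma inormE A :
  inorm A = Num.sqrt (\sum_(K : {set 'I_4} | ord0 \notin K) A (ord0 |: K) ^+ 2).
Proof.
rewrite /inorm (reindex_onto (fun K => ord0 |: K) (fun J => J :\ ord0)) /=; last exact: setD1K.
congr Num.sqrt; apply: eq_bigl => K; rewrite setU11 /=.
by apply/eqP/idP => [<-|/setU1K//]; rewrite !inE eqxx.
Qed.

Lemma wedge1r A : wedge A (blade R set0) = A.
Proof.
apply/ffunP => L; rewrite ffunE (bigD1 L) //= [X in _ + X]big1 ?addr0 => [|J JL].
  rewrite (bigD1 set0) /=; last by rewrite -setI_eq0 setI0 setU0 !eqxx.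
  rewrite big1 => [|K /andP[_ K0]]; first by rewrite !ffunE eqxx sgnJK_set0r mul1r mulr1 addr0.
  by rewrite ffunE (negbTE K0) mulr0.
rewrite big1 // => K /andP[_ JKL]; rewrite /blade ffunE.
case: eqP => [K0|_]; last by rewrite mulr0.
by rewrite K0 setU0 (negbTE JL) in JKL.
Qed.

Lemma hodge_blade_setT : hodge (blade R setT) = blade R set0.
Proof.
apply/ffunP => L; rewrite !ffunE -setC0 (inj_eq (@setC_inj _)).
by case: eqP => [->|_]; rewrite ?setC0 ?sgnJK_set0r ?mulr0 ?mulr1.
Qed.

Definition wedges (s : seq (mv R)) : mv R := foldr (@wedge R) (blade R set0) s.

Lemma hodge_joins s : hodge (joins s) = wedges (map (@hodge R) s).
Proof.
elim: s => [|a [|b s] IH]; first exact: hodge_blade_setT.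
  by rewrite /= wedge1r.
by rewrite [joins _]/= /join unhodgeK IH.
Qed.

Lemma joinsE s : joins s = unhodge (wedges (map (@hodge R) s)).
Proof. by rewrite -hodge_joins hodgeK. Qed.

Definition is_vector u := forall L, #|L| != 1%N -> u L = 0.

Lemma disjoint_set1U j K L :
  [disjoint [set j] & K] && ([set j] :|: K == L) = (j \in L) && (K == L :\ j).
Proof.
rewrite disjoints1; apply/andP/andP => [[jK /eqP<-]|[jL /eqP->]].
  by rewrite setU11 setU1K.
by rewrite setD11 setD1K.
Qed.

Lemma wedge_vectorE u X L : is_vector u ->
  wedge u X L = \sum_(j in L) sgnJK R [set j] (L :\ j) * u [set j] * X (L :\ j).
Proof.
move=> uv; rewrite ffunE sum_card1 => [|J J1]; last first.
  by rewrite big1 // => K _; rewrite uv // mulr0 mul0r.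
rewrite [RHS]big_mkcond; apply: eq_bigr => j _; under eq_bigl do rewrite disjoint_set1U.
by case: (j \in L); [rewrite (big_pred1 (L :\ j)) | rewrite big_pred0].
Qed.

Lemma sgnJK_ord0l M : sgnJK R [set ord0] M = 1.
Proof.
rewrite sgnJK_set1l (_ : [set y in M | _] = set0) ?cards0 //.
by apply/setP => y; rewrite !inE ltn0 andbF.
Qed.

Lemma sgnJK_set1lU0 j M : j != ord0 -> ord0 \notin M ->
  sgnJK R [set j] (ord0 |: M) = - sgnJK R [set j] M.
Proof.
move=> j0 M0; rewrite !sgnJK_set1l.
rewrite (_ : [set y in ord0 |: M | _] = ord0 |: [set y in M | (y < j)%N]).
  by rewrite cardsU1 inE (negbTE M0) exprS mulN1r.
by apply/setP => y; rewrite !inE; case: eqP => //= ->; rewrite lt0n.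
Qed.

Lemma wedge_vector_e0 u X K : is_vector u -> ord0 \notin K ->
  wedge u X (ord0 |: K) = u [set ord0] * X K
    - \sum_(j in K) sgnJK R [set j] (K :\ j) * u [set j] * X (ord0 |: K :\ j).
Proof.
move=> uv K0; rewrite wedge_vectorE // big_setU1 //= setU1K // sgnJK_ord0l mul1r.
congr (_ + _); rewrite -sumrN; apply: eq_bigr => j jK.
have j0 : j != ord0 by apply: contraNneq K0 => <-.
rewrite (_ : (ord0 |: K) :\ j = ord0 |: K :\ j) ?sgnJK_set1lU0 ?mulNr //.
  by rewrite !inE negb_and negbK K0 orbT.
by apply/setP => y; rewrite !inE; case: (y =P ord0) => [->|_] /=; rewrite 1?eq_sym ?j0.
Qed.

Lemma faces_ord0 (T : Type) n (F : 'I_n.+1 -> T) :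
  [seq F j | j <- enum 'I_n.+1 & j != ord0] = [seq F (lift ord0 j) | j <- enum 'I_n].
Proof.
rewrite enum_ordSl /= filter_map -map_comp; congr map.
by apply/all_filterP/allP.
Qed.

Lemma faces_lift0 (T : Type) n (F : 'I_n.+1 -> T) (i : 'I_n) :
  [seq F j | j <- enum 'I_n.+1 & j != lift ord0 i]
    = F ord0 :: [seq F (lift ord0 j) | j <- enum 'I_n & j != i].
Proof. by rewrite enum_ordSl /= filter_map -map_comp. Qed.

Definition face_wedge_sum n (u : 'I_n -> mv R) : mv R :=
  \sum_(i < n) mvscale ((-1) ^+ i) (wedges [seq u j | j <- enum 'I_n & j != i]).

Lemma wedges_vectors_e0 n (u : 'I_n -> mv R) (c : R) K :
    (forall i, is_vector (u i)) -> (forall i, u i [set ord0] = c) -> ord0 \notin K ->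
  wedges [seq u i | i <- enum 'I_n] (ord0 |: K) = c * face_wedge_sum u K.
Proof.
elim: n u K => [|n IH] u K uv uc K0.
  rewrite enum_ord0 /face_wedge_sum big_ord0 !ffunE mulr0.
  by case: eqP => // /setP /(_ ord0); rewrite !inE eqxx.
rewrite enum_ordSl /= -map_comp wedge_vector_e0 // uc.
have IHK j : wedges [seq (u \o lift ord0) i | i <- enum 'I_n] (ord0 |: K :\ j)
    = c * face_wedge_sum (u \o lift ord0) (K :\ j).
  by apply: IH => [i|i|]; [exact: uv | exact: uc | rewrite !inE negb_and K0 orbT].
under eq_bigr do rewrite IHK /face_wedge_sum sum_ffunE !big_distrr.
rewrite /face_wedge_sum sum_ffunE big_ord_recl !ffunE expr0 mul1r faces_ord0 mulrDr.
congr (_ + _); rewrite exchange_big big_distrr -sumrN /=; apply: eq_bigr => i _.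
rewrite ffunE faces_lift0 /= wedge_vectorE // !big_distrr -sumrN; apply: eq_bigr => j _.
rewrite ffunE /= exprS mulN1r mulNr mulrN; congr (- _).
by rewrite mulrCA; congr (c * _); rewrite mulrCA.
Qed.

Lemma hodge2E A L : hodge (hodge A) L = sgnJK R (~: L) L * sgnJK R L (~: L) * A L.
Proof. by rewrite !ffunE setCK mulrA. Qed.

Lemma hodge_point_vector (p : 'rV[R]_3) : is_vector (hodge (point p)).
Proof.
move=> L L1; have nL j : (L == [set j]) = false.
  by apply: contraNF L1 => /eqP->; rewrite cards1.
by rewrite hodge2E !ffunE !nL !mulr0 !addr0 mulr0.
Qed.

Lemma hodge_point_e0 (p : 'rV[R]_3) : hodge (point p) [set ord0] = -1.
Proof.
have n0 (j : 'I_4) : j != ord0 -> ([set ord0] == [set j]) = false.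
  by move=> j0; apply: contraNF j0 => /eqP/set1_inj->.
rewrite hodge2E sgnJK_ord0l sgnJK_set1r !ffunE eqxx !n0 ?mulr0 ?addr0 ?mulr1 //.
rewrite (_ : [set x in _ | _] = [set~ ord0]) ?cardsC1 ?card_ord //.
  by rewrite -signr_odd expr1.
by apply/setP => x; rewrite !inE lt0n andbb.
all: by rewrite -val_eqE /= inordK.
Qed.

Lemma unhodge_lincomb (I : Type) (r : seq I) (a : I -> R) (W : I -> mv R) :
  \sum_(i <- r) mvscale (a i) (unhodge (W i))
  = unhodge (\sum_(i <- r) mvscale (a i) (W i)).
Proof.
apply/ffunP => L; rewrite !ffunE !sum_ffunE big_distrr.
by apply: eq_bigr => i _; rewrite !ffunE mulrCA.
Qed.

Lemma enorm_joins_boundary n (v : 'I_n -> 'rV[R]_3) :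
  enorm (joins [seq point (v i) | i <- enum 'I_n])
  = inorm (\sum_(i < n) mvscale ((-1) ^+ i)
             (joins [seq point (v j) | j <- enum 'I_n & j != i])).
Proof.
pose u i := hodge (point (v i)).
have joins_u s : joins [seq point (v j) | j <- s] = unhodge (wedges [seq u j | j <- s]).
  by rewrite joinsE -map_comp.
under eq_bigr do rewrite joins_u.
rewrite joins_u unhodge_lincomb enorm_unhodge inorm_unhodge inormE /enorm.
congr Num.sqrt; apply: eq_bigr => K K0.
rewrite (@wedges_vectors_e0 _ _ (-1)) ?mulN1r ?sqrrN // => i.
  exact: hodge_point_vector.
exact: hodge_point_e0.
Qed.

End PGA.

Lemma boundary_carrier_sumE (R : rcfType) k (v : 'I_k.+1 -> 'rV[R]_3) :
  boundary_carrier_sum v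
  = \sum_(i < k.+1) mvscale ((-1) ^+ i)
      (joins [seq point (v j) | j <- enum 'I_k.+1 & j != i]).
Proof. by apply: eq_bigr => i _; rewrite /carrier /face -map_comp. Qed.

Theorem theorem1 (R : rcfType) (k : nat) (v : 'I_k.+1 -> 'rV[R]_3) :
  (1 <= k <= 3)%N ->
  (k`!%:R)^-1 * enorm (joins [seq point (v i) | i <- enum 'I_k.+1])
    = (k`!%:R)^-1 * inorm (boundary_carrier_sum v)
  /\
  (k`!%:R)^-1 * inorm (boundary_carrier_sum v)
    = (k`!%:R)^-1 * inorm (\sum_(i < k.+1) mvscale ((-1) ^+ i)
          (joins [seq point (v j) | j <- enum 'I_k.+1 & j != i])).
Proof. by move=> _; rewrite boundary_carrier_sumE enorm_joins_boundary. Qed.
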